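(* Let $\lambda$ be a nonzero real number. For every integer $n\ge0$ and every real $x$ with $1+\lambda x>0$, \[ \mathrm{Bel}_{n+1,\lambda}(x)=\frac{x}{1+\lambda x}\Big(\mathrm{Bel}_{n,\lambda}'(x)+\mathrm{Bel}_{n,\lambda}(x)+\lambda x\,\mathrm{Bel}_{n,\lambda}'(x)\Big), \] where $\mathrm{Bel}_{n,\lambda}'(x)=\frac{d}{dx}\mathrm{Bel}_{n,\lambda}(x)$.
   Context: For nonzero real $\lambda$, $e_\lambda(x)=(1+\lambda x)^{1/\lambda}$ and $e_\lambda^{-1}(x)=(1+\lambda x)^{-1/\lambda}$. The new type degenerate Bell polynomials $\mathrm{Bel}_{n,\lambda}(x)$ are defined by $e_{\lambda}(xe^{t})\,e_{\lambda}^{-1}(x)=\big(\frac{1+\lambda xe^t}{1+\lambda x}\big)^{1/\lambda}=\sum_{n=0}^{\infty}\mathrm{Bel}_{n,\lambda}(x)\frac{t^{n}}{n!}$ (expansion in powers of $t$). *)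

From Stdlib Require Import Reals.
From Coquelicot Require Import Coquelicot.
Open Scope R_scope.

(* Generating function of the new type degenerate Bell polynomials:
   t |-> e_lambda(x e^t) e_lambda^{-1}(x) = ((1 + lambda x e^t)/(1 + lambda x))^(1/lambda).
   Near t = 0 (when 1 + lambda x > 0) the base is positive, so Rpower is the
   genuine real power. *)
Definition belGF (lam x t : R) : R :=
  Rpower ((1 + lam * x * exp t) / (1 + lam * x)) (1 / lam).

(* Bel_{n,lambda}(x): the coefficient of t^n/n! in the expansion in powers
   of t, i.e. the n-th t-derivative of the generating function at t = 0. *)
Definition Bel (n : nat) (lam x : R) : R :=
  Derive_n (fun t => belGF lam x t) n 0.

From Stdlib Require Import Reals Lra.
From Coquelicot Require Import Coquelicot.
Open Scope R_scope.

(** Write [F(t) = belGF lam x t] and [v(t) = x e^t / (1 + lam x e^t)].  Then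
    [F' = F v] and [v] is logistic, [v' = v (1 - lam v)], so by induction
    [F^(n) = F * P_n(v)] for polynomials with
    [P_(n+1)(v) = v P_n(v) + v (1 - lam v) P_n'(v)].  At [t = 0] we have
    [F = 1] and [v = w := x / (1 + lam x)], so [Bel_n(x) = P_n(w)].  Since
    [dw/dx = 1 / (1 + lam x)^2] and [1 - lam w = 1 / (1 + lam x)], the chain
    rule turns the recurrence for [P_n] into the recurrence for [Bel_n]. *)

Inductive is_poly : (R -> R) -> Prop :=
  | is_poly_const c : is_poly (fun _ => c)
  | is_poly_id : is_poly (fun v => v)
  | is_poly_plus f g : is_poly f -> is_poly g -> is_poly (fun v => f v + g v)
  | is_poly_opp f : is_poly f -> is_poly (fun v => - f v)
  | is_poly_mult f g : is_poly f -> is_poly g -> is_poly (fun v => f v * g v).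

Lemma is_poly_derive (f : R -> R) :
  is_poly f -> exists f', is_poly f' /\ forall v, is_derive f v (f' v).
Proof.
  induction 1 as [c| |f g _ [f' [Pf' Df]] _ [g' [Pg' Dg]]
                 |f _ [f' [Pf' Df]]|f g Pf [f' [Pf' Df]] Pg [g' [Pg' Dg]]].
  - exists (fun _ => 0); split; [constructor | intro v; auto_derive; reflexivity].
  - exists (fun _ => 1); split; [constructor | intro v; auto_derive; reflexivity].
  - exists (fun v => f' v + g' v); split; [now constructor|].
    intro v; exact (is_derive_plus f g v _ _ (Df v) (Dg v)).
  - exists (fun v => - f' v); split; [now constructor|].
    intro v; exact (is_derive_opp f v _ (Df v)).
  - exists (fun v => f' v * g v + f v * g' v); split.
    + repeat constructor; assumption.
    + intro v; exact (is_derive_mult f g v _ _ (Df v) (Dg v) Rmult_comm).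
Qed.

Lemma continuous_pos_near (f : R -> R) (x : R) :
  continuous f x -> 0 < f x -> locally x (fun y => 0 < f y).
Proof. intros Cf Hx; exact (Cf _ (open_gt 0 _ Hx)). Qed.

Section BelGeneratingFunction.

Variable lam : R.
Hypothesis lam_neq0 : lam <> 0.

Definition bel_logder (x t : R) : R := x * exp t / (1 + lam * x * exp t).

Definition bel_poly_step (p p' : R -> R) (v : R) : R :=
  v * p v + p' v * (v * (1 - lam * v)).

Definition bel_repr (n : nat) (p : R -> R) : Prop :=
  forall x t, 0 < 1 + lam * x -> 0 < 1 + lam * x * exp t ->
    Derive_n (fun s => belGF lam x s) n t = belGF lam x t * p (bel_logder x t).

Lemma bel_base_pos_near (x t : R) :
  0 < 1 + lam * x * exp t -> locally t (fun s => 0 < 1 + lam * x * exp s).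
Proof.
  apply (continuous_pos_near (fun s => 1 + lam * x * exp s)).
  apply (@ex_derive_continuous R_AbsRing R_NormedModule); auto_derive; auto.
Qed.

Lemma is_derive_belGF (x t : R) :
  0 < 1 + lam * x -> 0 < 1 + lam * x * exp t ->
  is_derive (belGF lam x) t (belGF lam x t * bel_logder x t).
Proof.
  intros Hx Ht; unfold belGF, bel_logder, Rpower; auto_derive.
  - apply Rdiv_lt_0_compat; assumption.
  - unfold Rdiv; field; lra.
Qed.

Lemma is_derive_bel_logder (x t : R) :
  0 < 1 + lam * x * exp t ->
  is_derive (bel_logder x) t (bel_logder x t * (1 - lam * bel_logder x t)).
Proof.
  intros Ht; unfold bel_logder; auto_derive.
  - lra.
  - field; lra.
Qed.

Lemma is_derive_belGF_mult_comp (x t : R) (p p' : R -> R) :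
  0 < 1 + lam * x -> 0 < 1 + lam * x * exp t ->
  (forall v, is_derive p v (p' v)) ->
  is_derive (fun s => belGF lam x s * p (bel_logder x s)) t
    (belGF lam x t * bel_poly_step p p' (bel_logder x t)).
Proof.
  intros Hx Ht Dp.
  assert (D := is_derive_mult (belGF lam x) (fun s => p (bel_logder x s)) t _ _
    (is_derive_belGF x t Hx Ht)
    (is_derive_comp p (bel_logder x) t _ _ (Dp _) (is_derive_bel_logder x t Ht))
    Rmult_comm).
  replace (belGF lam x t * bel_poly_step p p' (bel_logder x t)) with
    (plus (mult (belGF lam x t * bel_logder x t) (p (bel_logder x t)))
       (mult (belGF lam x t)
          (scal (bel_logder x t * (1 - lam * bel_logder x t)) (p' (bel_logder x t)))));
    [exact D|].
  unfold bel_poly_step, plus, mult, scal; simpl; unfold mult; simpl; ring.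
Qed.

Lemma Derive_n_belGF_succ (n : nat) (p p' : R -> R) (x t : R) :
  bel_repr n p -> (forall v, is_derive p v (p' v)) ->
  0 < 1 + lam * x -> 0 < 1 + lam * x * exp t ->
  Derive_n (fun s => belGF lam x s) (S n) t =
    belGF lam x t * bel_poly_step p p' (bel_logder x t).
Proof.
  intros Rp Dp Hx Ht; simpl.
  rewrite (Derive_ext_loc _ (fun s => belGF lam x s * p (bel_logder x s))).
  - apply is_derive_unique, is_derive_belGF_mult_comp; assumption.
  - eapply filter_imp; [|exact (bel_base_pos_near x t Ht)].
    intros s Hs; apply Rp; assumption.
Qed.

Lemma bel_repr_poly (n : nat) : exists p, is_poly p /\ bel_repr n p.
Proof.
  induction n as [|n [p [Pp Rp]]].
  - exists (fun _ => 1); split; [constructor|].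
    intros x t _ _; simpl; ring.
  - destruct (is_poly_derive p Pp) as [p' [Pp' Dp]].
    exists (bel_poly_step p p'); split.
    + unfold bel_poly_step; repeat constructor; assumption.
    + intros x t; apply Derive_n_belGF_succ; assumption.
Qed.

Lemma belGF_0 (x : R) : 0 < 1 + lam * x -> belGF lam x 0 = 1.
Proof.
  intros Hx; unfold belGF, Rpower.
  rewrite exp_0, Rmult_1_r, Rdiv_diag by lra.
  rewrite ln_1, Rmult_0_r; apply exp_0.
Qed.

Lemma bel_logder_0 (x : R) : bel_logder x 0 = x / (1 + lam * x).
Proof. unfold bel_logder; rewrite exp_0, !Rmult_1_r; reflexivity. Qed.

Lemma bel_base_pos_0 (x : R) : 0 < 1 + lam * x -> 0 < 1 + lam * x * exp 0.
Proof. rewrite exp_0, Rmult_1_r; trivial. Qed.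

Lemma Bel_repr (n : nat) (p : R -> R) (x : R) :
  bel_repr n p -> 0 < 1 + lam * x -> Bel n lam x = p (x / (1 + lam * x)).
Proof.
  intros Rp Hx; unfold Bel.
  rewrite (Rp x 0 Hx (bel_base_pos_0 x Hx)), belGF_0, bel_logder_0 by assumption.
  ring.
Qed.

Lemma Bel_succ_repr (n : nat) (p p' : R -> R) (x : R) :
  bel_repr n p -> (forall v, is_derive p v (p' v)) -> 0 < 1 + lam * x ->
  Bel (S n) lam x = bel_poly_step p p' (x / (1 + lam * x)).
Proof.
  intros Rp Dp Hx; unfold Bel.
  rewrite (Derive_n_belGF_succ n p p' x 0 Rp Dp Hx (bel_base_pos_0 x Hx)).
  rewrite belGF_0, bel_logder_0 by assumption; ring.
Qed.

Lemma Derive_Bel_repr (n : nat) (p p' : R -> R) (x : R) :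
  bel_repr n p -> (forall v, is_derive p v (p' v)) -> 0 < 1 + lam * x ->
  Derive (fun y => Bel n lam y) x = p' (x / (1 + lam * x)) / (1 + lam * x) ^ 2.
Proof.
  intros Rp Dp Hx.
  rewrite (Derive_ext_loc _ (fun y => p (y / (1 + lam * y)))).
  - apply is_derive_unique.
    assert (Dw : is_derive (fun y => y / (1 + lam * y)) x (1 / (1 + lam * x) ^ 2)).
    { auto_derive; [lra | field; lra]. }
    replace (p' (x / (1 + lam * x)) / (1 + lam * x) ^ 2) with
      (scal (1 / (1 + lam * x) ^ 2) (p' (x / (1 + lam * x)))).
    + exact (is_derive_comp p _ x _ _ (Dp _) Dw).
    + unfold scal; simpl; unfold mult; simpl; field; lra.
  - eapply filter_imp; [|apply (continuous_pos_near (fun y => 1 + lam * y)); [|exact Hx]].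
    + intros y Hy; apply Bel_repr; assumption.
    + apply (@ex_derive_continuous R_AbsRing R_NormedModule); auto_derive; auto.
Qed.

End BelGeneratingFunction.

Theorem theorem9 (lam : R) (n : nat) (x : R) :
  lam <> 0 -> 0 < 1 + lam * x ->
  Bel (S n) lam x =
    x / (1 + lam * x) *
      (Derive (fun y => Bel n lam y) x + Bel n lam x
       + lam * x * Derive (fun y => Bel n lam y) x).
Proof.
  intros Hl Hx.
  destruct (bel_repr_poly lam Hl n) as [p [Pp Rp]].
  destruct (is_poly_derive p Pp) as [p' [_ Dp]].
  rewrite (Bel_succ_repr lam Hl n p p' x Rp Dp Hx),
    (Derive_Bel_repr lam n p p' x Rp Dp Hx), (Bel_repr lam n p x Rp Hx).
  unfold bel_poly_step; field; lra.
Qed.
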